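(* Let $\mathcal{H}_S\cong\mathbb{C}^d$ (system) and $\mathcal{H}_E$ (environment) be finite-dimensional Hilbert spaces, let $\eta$ be a density operator on $\mathcal{H}_E$, and let $U_1,U_2$ be unitaries on $\mathcal{H}_S\otimes\mathcal{H}_E$ describing the joint evolution from time $r$ to time $s$ and from time $s$ to time $t$ ($r<s<t$), respectively. Define the linear maps on $\mathcal{B}(\mathcal{H}_S)$ $$\Lambda_{s:r}(X)=\operatorname{tr}_E[U_1(X\otimes\eta)U_1^\dagger],\qquad \Lambda_{t:r}(X)=\operatorname{tr}_E[U_2U_1(X\otimes\eta)U_1^\dagger U_2^\dagger],$$ and, for each density operator $\rho$ on $\mathcal{H}_S$, $\eta_s(\rho):=\operatorname{tr}_S[U_1(\rho\otimes\eta)U_1^\dagger]$ and $\Lambda^{(\rho)}_{t:s}(\sigma):=\operatorname{tr}_E[U_2(\sigma\otimes\eta_s(\rho))U_2^\dagger]$. Suppose the process is oCP-divisible, i.e. $\Lambda^{(\rho)}_{t:s}$ is the same map $\Lambda_{t:s}$ for every density operator $\rho$, and $\Lambda_{t:r}=\Lambda_{t:s}\circ\Lambda_{s:r}$. If in addition $\Lambda_{s:r}$ is invertible as a linear map on $\mathcal{B}(\mathcal{H}_S)$, then the map $\Phi_{t:s}:=\Lambda_{t:r}\circ\Lambda_{s:r}^{-1}$ is completely positive, i.e. the process is also iCP-divisible.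
   Context: $\operatorname{tr}_E$ and $\operatorname{tr}_S$ denote partial traces over environment and system. The map $\Lambda^{(\rho)}_{t:s}$ describes the system dynamics from $s$ to $t$ when the system was prepared in $\rho$ at time $r$, discarded just before $s$ and replaced by a fresh state $\sigma$ at $s$. ''iCP-divisible'' (CP divisible by inversion) means: $\Lambda_{s:r}$ is invertible and $\Lambda_{t:r}\circ\Lambda_{s:r}^{-1}$ is completely positive. *)

(* Finite-dimensional quantum mechanics over an abstract
   numClosedFieldType C (the library's structure for complex-like fields;
   the complex numbers are an instance).  Matrices 'M[C]_n model B(C^n);
   tensor products use the Kronecker product [tensmx] of mathcomp-real-closed,
   with the index convention of [mxtens_index] (system index first). *)
From HB Require Import structures.
From mathcomp Require Import all_boot all_order all_algebra.
From mathcomp Require Import mxtens.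
Set Implicit Arguments.
Unset Strict Implicit.
Unset Printing Implicit Defensive.
Import Order.TTheory GRing.Theory Num.Theory.
Local Open Scope ring_scope.

Section QDefs.
Context {C : numClosedFieldType}.

Definition adjmx {m n} (A : 'M[C]_(m, n)) : 'M[C]_(n, m) := map_mx Num.conj (A^T).

Definition unitary {n} (U : 'M[C]_n) : Prop := U *m adjmx U = 1%:M.

Definition psd {n} (A : 'M[C]_n) : Prop :=
  adjmx A = A /\ forall v : 'cV[C]_n, 0 <= (adjmx v *m A *m v) ord0 ord0.

Definition density {n} (rho : 'M[C]_n) : Prop := psd rho /\ \tr rho = 1.

Definition ptrE {d e} (M : 'M[C]_(d * e)) : 'M[C]_d :=
  \matrix_(i, j) \sum_(k < e) M (mxtens_index (i, k)) (mxtens_index (j, k)).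

Definition ptrS {d e} (M : 'M[C]_(d * e)) : 'M[C]_e :=
  \matrix_(k, l) \sum_(i < d) M (mxtens_index (i, k)) (mxtens_index (i, l)).

Definition blockmx {k d} (X : 'M[C]_(k * d)) (a b : 'I_k) : 'M[C]_d :=
  \matrix_(i, j) X (mxtens_index (a, i)) (mxtens_index (b, j)).

(* ampliation id_k (x) Phi *)
Definition ampl {d} (k : nat) (Phi : 'M[C]_d -> 'M[C]_d) (X : 'M[C]_(k * d))
  : 'M[C]_(k * d) :=
  \sum_(a < k) \sum_(b < k) tensmx (delta_mx a b : 'M[C]_k) (Phi (blockmx X a b)).

Definition completely_positive {d} (Phi : 'M[C]_d -> 'M[C]_d) : Prop :=
  forall (k : nat) (X : 'M[C]_(k * d)), psd X -> psd (ampl Phi X).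

Definition Lsr {d e} (eta : 'M[C]_e) (U1 : 'M[C]_(d * e)) (X : 'M[C]_d) : 'M[C]_d :=
  ptrE (U1 *m tensmx X eta *m adjmx U1).

Definition Ltr {d e} (eta : 'M[C]_e) (U1 U2 : 'M[C]_(d * e)) (X : 'M[C]_d)
  : 'M[C]_d :=
  ptrE (U2 *m U1 *m tensmx X eta *m adjmx U1 *m adjmx U2).

Definition eta_s {d e} (eta : 'M[C]_e) (U1 : 'M[C]_(d * e)) (rho : 'M[C]_d)
  : 'M[C]_e :=
  ptrS (U1 *m tensmx rho eta *m adjmx U1).

Definition Lts_rho {d e} (eta : 'M[C]_e) (U1 U2 : 'M[C]_(d * e)) (rho : 'M[C]_d)
  (sigma : 'M[C]_d) : 'M[C]_d :=
  ptrE (U2 *m tensmx sigma (eta_s eta U1 rho) *m adjmx U2).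

End QDefs.

(* Since Linv is a right inverse of Lambda_{s:r}, oCP-divisibility gives
   Lambda_{t:r} o Linv = Lambda_{t:s} = Lambda^(rho)_{t:s} for any state rho, i.e.
   the map sigma |-> tr_E[U2 (sigma (x) eta_s(rho)) U2^+].  Writing the positive
   operator eta_s(rho) as B^+ B, this dilation takes the Kraus form
   sigma |-> sum_kl K_kl sigma K_kl^+ with K_kl = <k| U2 (1 (x) B^+) |l>, and
   ampliations of Kraus maps are again Kraus maps, hence positive. *)

From HB Require Import structures.
From mathcomp Require Import all_boot all_order all_algebra.
From mathcomp Require Import mxtens spectral.
Set Implicit Arguments.
Unset Strict Implicit.
Unset Printing Implicit Defensive.
Import GRing.Theory Num.Theory.
Local Open Scope ring_scope.

Section Adjoint.
Context {C : numClosedFieldType}.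

Lemma adjmxE m n (A : 'M[C]_(m, n)) i j : adjmx A i j = (A j i)^*.
Proof. by rewrite !mxE. Qed.

Lemma adjmxK m n (A : 'M[C]_(m, n)) : adjmx (adjmx A) = A.
Proof. exact: trmxCK. Qed.

Lemma adjmxM m n p (A : 'M[C]_(m, n)) (B : 'M[C]_(n, p)) :
  adjmx (A *m B) = adjmx B *m adjmx A.
Proof. by rewrite /adjmx trmx_mul map_mxM. Qed.

Lemma adjmx_sum (I : finType) m n (F : I -> 'M[C]_(m, n)) :
  adjmx (\sum_i F i) = \sum_i adjmx (F i).
Proof. by rewrite /adjmx raddf_sum [LHS]raddf_sum. Qed.

Lemma adjmx_delta m n (i : 'I_m) (j : 'I_n) :
  adjmx (delta_mx i j : 'M[C]_(m, n)) = delta_mx j i.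
Proof. by apply/matrixP => k l; rewrite !mxE conjC_nat andbC. Qed.

Lemma adjmx1 n : adjmx (1%:M : 'M[C]_n) = 1%:M.
Proof. by rewrite /adjmx trmx1 map_mx1. Qed.

Lemma adjmx_tens m n p q (A : 'M[C]_(m, n)) (B : 'M[C]_(p, q)) :
  adjmx (tensmx A B) = tensmx (adjmx A) (adjmx B).
Proof. by rewrite /adjmx trmx_tens map_mxT. Qed.

End Adjoint.

Section Positivity.
Context {C : numClosedFieldType}.

Lemma psd_dim0 n (A : 'M[C]_n) : n = 0%N -> psd A.
Proof.
move=> n0; subst n; split; first by apply/matrixP => -[].
by move=> v; rewrite mxE big_ord0.
Qed.

Lemma psd_mulmx_adj m n (A : 'M[C]_(m, n)) (X : 'M[C]_n) :
  psd X -> psd (A *m X *m adjmx A).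
Proof.
move=> [hermX posX]; split; first by rewrite !adjmxM adjmxK hermX mulmxA.
by move=> v; have := posX (adjmx A *m v); rewrite adjmxM adjmxK !mulmxA.
Qed.

Lemma psd_sum (I : finType) n (F : I -> 'M[C]_n) :
  (forall i, psd (F i)) -> psd (\sum_i F i).
Proof.
move=> psdF; split.
  by rewrite adjmx_sum; apply: eq_bigr => i _; case: (psdF i).
move=> v; rewrite mulmx_sumr mulmx_suml summxE.
by apply: sumr_ge0 => i _; case: (psdF i) => _ ->.
Qed.

Lemma psd_gram m n (M : 'M[C]_(m, n)) : psd (adjmx M *m M).
Proof.
split; first by rewrite adjmxM adjmxK.
move=> v; rewrite !mulmxA -adjmxM -mulmxA mxE.
by apply: sumr_ge0 => i _; rewrite adjmxE mulrC mul_conjC_ge0.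
Qed.

(* Diagonalise A = P^+ D P with P unitary; testing A against the rows of P
   shows that D is nonnegative, so B = sqrt(D) P works. *)
Lemma psd_gramP n (A : 'M[C]_n) : psd A -> exists B : 'M[C]_n, A = adjmx B *m B.
Proof.
move=> [hermA posA].
have normalA : A \is normalmx.
  by apply/normalmxP; change (A *m adjmx A = adjmx A *m A); rewrite hermA.
set P := spectralmx A; set c := spectral_diag A.
have PPadj : P *m adjmx P = 1%:M by apply/unitarymxP/spectral_unitarymx.
have defA : A = adjmx P *m diag_mx c *m P.
  by rewrite {1}(orthomx_spectralP normalA) invmx_unitary ?spectral_unitarymx.
have c_ge0 i : 0 <= c 0 i.
  have rowPP : row i P *m adjmx P = 'e_i by rewrite -row_mul PPadj row1.
  have := posA (adjmx (row i P)).
  rewrite adjmxK defA !mulmxA rowPP -mulmxA -[P *m _]adjmxK adjmxM adjmxK rowPP.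
  rewrite -rowE row_diag_mx -scalemxAl mxE adjmx_delta mul_delta_mx.
  by rewrite mxE eqxx mulr1.
set s := \row_i sqrtC (c 0 i).
have sq_s : adjmx (diag_mx s) *m diag_mx s = diag_mx c.
  apply/matrixP => i j; rewrite !mxE (bigD1 i) //= big1 => [|k ki]; last first.
    by rewrite adjmxE mxE (negbTE ki) mulr0n conjC0 mul0r.
  rewrite adjmxE !mxE eqxx mulr1n addr0 mulrnAr.
  by rewrite conj_Creal ?ger0_real ?sqrtC_ge0 // -expr2 sqrtCK.
by exists (diag_mx s *m P); rewrite adjmxM defA -sq_s !mulmxA.
Qed.

Lemma psd_tens m n (A : 'M[C]_m) (B : 'M[C]_n) :
  psd A -> psd B -> psd (tensmx A B).
Proof.
move=> /psd_gramP [P ->] /psd_gramP [Q ->].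
by rewrite -tensmx_mul -adjmx_tens; apply: psd_gram.
Qed.

End Positivity.

Section Kraus.
Context {C : numClosedFieldType}.

Definition kraus_map (T : finType) m n (K : T -> 'M[C]_(m, n)) (X : 'M[C]_n)
  : 'M[C]_m :=
  \sum_t K t *m X *m adjmx (K t).

Lemma kraus_map_psd (T : finType) m n (K : T -> 'M[C]_(m, n)) X :
  psd X -> psd (kraus_map K X).
Proof. by move=> psdX; apply: psd_sum => t; apply: psd_mulmx_adj. Qed.

Lemma kraus_map_conj (T : finType) m n p (A : 'M[C]_(p, m))
    (K : T -> 'M[C]_(m, n)) X :
  A *m kraus_map K X *m adjmx A = kraus_map (fun t => A *m K t) X.
Proof.
rewrite mulmx_sumr mulmx_suml; apply: eq_bigr => t _.
by rewrite adjmxM !mulmxA.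
Qed.

Lemma kraus_map_comp (T S : finType) m n p (K : T -> 'M[C]_(m, n))
    (L : S -> 'M[C]_(n, p)) X :
  kraus_map K (kraus_map L X) = kraus_map (fun ts : T * S => K ts.1 *m L ts.2) X.
Proof.
rewrite {1}/kraus_map; under eq_bigr => t _ do rewrite kraus_map_conj.
exact: pair_big.
Qed.

Lemma tensmx_sumr (I : finType) m n p q (A : 'M[C]_(m, n))
    (F : I -> 'M[C]_(p, q)) :
  tensmx A (\sum_i F i) = \sum_i tensmx A (F i).
Proof.
apply/matrixP => i j; rewrite summxE !mxE summxE mulr_sumr.
by apply: eq_bigr => t _; rewrite mxE.
Qed.

Lemma kraus_map_sum (T I : finType) m n (K : T -> 'M[C]_(m, n))
    (F : I -> 'M[C]_n) :
  kraus_map K (\sum_i F i) = \sum_i kraus_map K (F i).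
Proof.
rewrite /kraus_map exchange_big; apply: eq_bigr => t _.
by rewrite mulmx_sumr mulmx_suml.
Qed.

Lemma kraus_map_tens (T : finType) m n p q (A : 'M[C]_(m, n))
    (K : T -> 'M[C]_(p, q)) (Y : 'M[C]_n) (Z : 'M[C]_q) :
  kraus_map (fun t => tensmx A (K t)) (tensmx Y Z)
  = tensmx (A *m Y *m adjmx A) (kraus_map K Z).
Proof.
rewrite /kraus_map tensmx_sumr; apply: eq_bigr => t _.
by rewrite adjmx_tens !tensmx_mul.
Qed.

Lemma tens_blockmx_sum k d (X : 'M[C]_(k * d)) :
  \sum_a \sum_b tensmx (delta_mx a b : 'M[C]_k) (blockmx X a b) = X.
Proof.
apply/matrixP => p q.
case: (mxtens_indexP p) => a i; case: (mxtens_indexP q) => b j.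
rewrite summxE; under eq_bigr => a' _ do rewrite summxE.
rewrite (bigD1 a) //= [X in _ + X]big1 => [|a' a'a]; last first.
  by rewrite big1 // => b' _; rewrite tensmxE mxE eq_sym (negbTE a'a) mul0r.
rewrite addr0 (bigD1 b) //= [X in _ + X]big1 => [|b' b'b]; last first.
  by rewrite tensmxE mxE eqxx eq_sym (negbTE b'b) mul0r.
by rewrite tensmxE !mxE !eqxx mul1r addr0.
Qed.

Lemma ampl_kraus_map (T : finType) k d (K : T -> 'M[C]_d) (X : 'M[C]_(k * d)) :
  ampl (kraus_map K) X = kraus_map (fun t => tensmx (1%:M : 'M[C]_k) (K t)) X.
Proof.
rewrite /ampl -[in RHS](tens_blockmx_sum X) kraus_map_sum.
apply: eq_bigr => a _; rewrite kraus_map_sum; apply: eq_bigr => b _.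
by rewrite kraus_map_tens mul1mx adjmx1 mulmx1.
Qed.

Lemma kraus_map_completely_positive (T : finType) d (K : T -> 'M[C]_d) :
  completely_positive (kraus_map K).
Proof. by move=> k X psdX; rewrite ampl_kraus_map; apply: kraus_map_psd. Qed.

Lemma completely_positive_ext d (Phi Psi : 'M[C]_d -> 'M[C]_d) :
  Phi =1 Psi -> completely_positive Phi -> completely_positive Psi.
Proof.
move=> PhiPsi cpPhi k X /cpPhi; congr psd.
by apply: eq_bigr => a _; apply: eq_bigr => b _; rewrite PhiPsi.
Qed.

End Kraus.

Section PartialTrace.
Context {C : numClosedFieldType}.

Lemma adjmx_mxsub m1 m2 n1 n2 (f : 'I_m2 -> 'I_m1) (g : 'I_n2 -> 'I_n1)
    (A : 'M[C]_(m1, n1)) :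
  adjmx (mxsub f g A) = mxsub g f (adjmx A).
Proof. by rewrite /adjmx trmx_mxsub map_mxsub. Qed.

Lemma mulmx_colsub1 m n p (f : 'I_n -> 'I_p) (M : 'M[C]_(m, p)) :
  M *m colsub f 1%:M = colsub f M.
Proof. by rewrite mulmx_colsub mulmx1. Qed.

Lemma adj_colsub1_mulmx m n p (f : 'I_m -> 'I_n) (M : 'M[C]_(n, p)) :
  adjmx (colsub f 1%:M) *m M = rowsub f M.
Proof. by rewrite adjmx_mxsub adjmx1 -rowsubE. Qed.

(* [tensE_mx k] is the isometry [1 (x) |k>] from C^d into C^d (x) C^e, and
   [tensS_mx i] is [|i> (x) 1] from C^e into C^d (x) C^e. *)
Definition tensE_mx d e (k : 'I_e) : 'M[C]_(d * e, d) :=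
  colsub (fun x => mxtens_index (x, k)) 1%:M.

Definition tensS_mx d e (i : 'I_d) : 'M[C]_(d * e, e) :=
  colsub (fun y => mxtens_index (i, y)) 1%:M.

Lemma ptrE_kraus d e (M : 'M[C]_(d * e)) :
  ptrE M = kraus_map (fun k => adjmx (tensE_mx d k)) M.
Proof.
apply/matrixP => i j; rewrite !mxE summxE; apply: eq_bigr => k _.
by rewrite adjmxK adj_colsub1_mulmx mulmx_colsub1 !mxE.
Qed.

Lemma ptrS_kraus d e (M : 'M[C]_(d * e)) :
  ptrS M = kraus_map (fun i => adjmx (tensS_mx e i)) M.
Proof.
apply/matrixP => k l; rewrite !mxE summxE; apply: eq_bigr => i _.
by rewrite adjmxK adj_colsub1_mulmx mulmx_colsub1 !mxE.
Qed.

Lemma tensE_mx_mulmxE d e n (k : 'I_e) (N : 'M[C]_(d, n)) x y j :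
  (tensE_mx d k *m N) (mxtens_index (x, y)) j = (y == k)%:R * N x j.
Proof.
rewrite /tensE_mx mxE (bigD1 x) //= big1 => [|z zx]; last first.
  by rewrite !mxE (can_eq (@mxtens_indexK _ _)) xpair_eqE eq_sym (negbTE zx) mul0r.
by rewrite !mxE (can_eq (@mxtens_indexK _ _)) xpair_eqE eqxx addr0.
Qed.

Lemma mulmx_adj_tensE_mxE d e n (k : 'I_e) (N : 'M[C]_(n, d)) i x y :
  (N *m adjmx (tensE_mx d k)) i (mxtens_index (x, y)) = (y == k)%:R * N i x.
Proof.
rewrite -[N *m _]adjmxK adjmxM adjmxK adjmxE tensE_mx_mulmxE.
by rewrite rmorphM /= conjC_nat adjmxE conjCK.
Qed.

Lemma tensmx1_kraus d e (s : 'M[C]_d) :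
  tensmx s (1%:M : 'M[C]_e) = kraus_map (@tensE_mx d e) s.
Proof.
apply/matrixP => p q.
case: (mxtens_indexP p) => x y; case: (mxtens_indexP q) => x' y'.
rewrite tensmxE summxE (bigD1 y) //= big1 => [|k ky]; last first.
  rewrite mulmx_adj_tensE_mxE tensE_mx_mulmxE [y == k]eq_sym (negbTE ky).
  by rewrite !(mul0r, mulr0).
by rewrite mulmx_adj_tensE_mxE tensE_mx_mulmxE eqxx mul1r mxE eq_sym addr0 mulrC.
Qed.

End PartialTrace.

Section Dilation.
Context {C : numClosedFieldType}.

Lemma stinespring_completely_positive d e (U : 'M[C]_(d * e)) (eta : 'M[C]_e) :
  psd eta ->
  completely_positive (fun s : 'M[C]_d => ptrE (U *m tensmx s eta *m adjmx U)).
Proof.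
move=> /psd_gramP [B ->].
set W := U *m tensmx (1%:M : 'M[C]_d) (adjmx B).
have dilate s : U *m tensmx s (adjmx B *m B) *m adjmx U
                = W *m tensmx s 1%:M *m adjmx W.
  rewrite /W adjmxM adjmx_tens adjmx1 adjmxK -!mulmxA; congr (U *m _).
  by rewrite !mulmxA !tensmx_mul mul1mx !mulmx1.
apply: completely_positive_ext (kraus_map_completely_positive
  (fun kl : 'I_e * 'I_e => adjmx (tensE_mx d kl.1) *m (W *m tensE_mx d kl.2))).
move=> s; rewrite dilate tensmx1_kraus kraus_map_conj ptrE_kraus.
by rewrite kraus_map_comp.
Qed.

Lemma eta_s_psd d e (U : 'M[C]_(d * e)) (eta : 'M[C]_e) (rho : 'M[C]_d) :
  psd eta -> psd rho -> psd (eta_s eta U rho).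
Proof.
move=> eta_psd rho_psd; rewrite /eta_s ptrS_kraus.
by apply/kraus_map_psd/psd_mulmx_adj/psd_tens.
Qed.

Lemma density_delta_mx n (i : 'I_n) : density (delta_mx i i : 'M[C]_n).
Proof.
rewrite -(mul_delta_mx (0 : 'I_1)); split.
  by rewrite -adjmx_delta; apply: psd_gram.
by rewrite mxtrace_mulC mul_delta_mx /mxtrace big_ord1 mxE.
Qed.

End Dilation.

Theorem mainTheorem1 (C : numClosedFieldType) (d e : nat)
  (eta : 'M[C]_e) (U1 U2 : 'M[C]_(d * e)) :
  density eta -> unitary U1 -> unitary U2 ->
  (* oCP-divisibility *)
  (exists Lts : 'M[C]_d -> 'M[C]_d,
      (forall rho : 'M[C]_d, density rho -> Lts_rho eta U1 U2 rho =1 Lts) /\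
      Ltr eta U1 U2 =1 Lts \o Lsr eta U1) ->
  (* Lambda_{s:r} invertible, with inverse Linv *)
  forall Linv : 'M[C]_d -> 'M[C]_d,
    cancel (Lsr eta U1) Linv -> cancel Linv (Lsr eta U1) ->
    completely_positive (Ltr eta U1 U2 \o Linv).
Proof.
move=> [eta_psd _] _ _ [Lts [Lts_rhoE LtrE]] Linv _ LinvK.
have [d0 | d_gt0] := posnP d.
  by move=> k X _; apply: psd_dim0; rewrite d0 muln0.
pose rho : 'M[C]_d := delta_mx (Ordinal d_gt0) (Ordinal d_gt0).
have rho_density : density rho := density_delta_mx _.
apply: completely_positive_ext
  (stinespring_completely_positive U2 (eta_s_psd U1 eta_psd rho_density.1)).
by move=> X /=; rewrite LtrE /= LinvK -(Lts_rhoE rho rho_density X).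
Qed.
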